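(* Let $u_1,u_2\in\mathcal U$ belong to the same group $C_k$ and satisfy $R(u_1)\ge R(u_2)$. If $F$ is a maxmin-fair distribution over the set $\mathcal S$ of valid rankings (for the satisfaction function $A=V$), then $$\mathbb E_{r\sim F}[f(r(u_1))]\ \ge\ \mathbb E_{r\sim F}[f(r(u_2))].$$
   Context: Ranking setting: $\mathcal U=\{u_1,\dots,u_n\}$ is a finite set of $n$ individuals, partitioned into groups $C_1,\dots,C_t$. $R:\mathcal U\to\mathbb R$ is a relevance function with pairwise distinct values. A ranking is a bijection $r:\mathcal U\to[n]$; $r(u)$ is the position of $u$. For each $i\in[n]$ and $k\in[t]$ there are integers $l_i^k\le u_i^k$, and the set of valid rankings is $\mathcal S=\{r : l_i^k\le |\{u\in C_k: r(u)\le i\}|\le u_i^k\ \forall i\in[n],k\in[t]\}$, assumed nonempty. The value function is $V(r,u)=f(r(u))-g(u)$, where $f:[n]\to\mathbb R$ is non-increasing ($f(1)\ge f(2)\ge\dots\ge f(n)$) and $g:\mathcal U\to\mathbb R$ is increasing in relevance, i.e. $R(u)\ge R(v)\Rightarrow g(u)\ge g(v)$. Maxmin-fairness: for a finite nonempty set $\mathcal S$ of solutions, a finite set $\mathcal U$ of individuals and a satisfaction function $A:\mathcal S\times\mathcal U\to\mathbb R$, for a probability distribution $D$ over $\mathcal S$ write $D[u]=\mathbb E_{S\sim D}[A(S,u)]$. A distribution $F$ over $\mathcal S$ is maxmin-fair for $(\mathcal U,A)$ if for every distribution $D$ over $\mathcal S$ and every $u\in\mathcal U$: if $D[u]>F[u]$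 then there exists $v\in\mathcal U$ with $D[v]<F[v]\le F[u]$. (Equivalently, the vector of values $(F[u])_{u\in\mathcal U}$ sorted increasingly is lexicographically $\ge$ the corresponding sorted vector of every distribution $D$.) Here $A=V$. *)

From HB Require Import structures.
From mathcomp Require Import all_boot all_order all_algebra.
Set Implicit Arguments. Unset Strict Implicit. Unset Printing Implicit Defensive.
Import Order.TTheory GRing.Theory Num.Theory.
Local Open Scope ring_scope.

(* A ranking of the individuals U is a bijection U -> [n], n = #|U|.
   Positions are 0-based: position p : 'I_n stands for the paper's p+1. *)
Definition ranking (U : finType) := {ffun U -> 'I_#|U|}.

(* r is a bijection (injective suffices since #|U| = #|'I_#|U||). *)
Definition is_ranking (U : finType) (r : ranking U) : bool := injectiveb r.

(* Number of members of group k among the first i+1 positions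
   (paper: |{u in C_k : r(u) <= i+1}|). *)
Definition prefix_count (U : finType) (t : nat) (grp : U -> 'I_t)
  (r : ranking U) (i : 'I_#|U|) (k : 'I_t) : nat :=
  #|[set u | (grp u == k) && (r u <= i)%N]|.

Definition valid_ranking (U : finType) (t : nat) (grp : U -> 'I_t)
  (lo hi : 'I_#|U| -> 'I_t -> int) (r : ranking U) : bool :=
  is_ranking r &&
  [forall i : 'I_#|U|, forall k : 'I_t,
     (lo i k <= (prefix_count grp r i k)%:Z) &&
     ((prefix_count grp r i k)%:Z <= hi i k)].

Definition is_distr_on (R : numDomainType) (T : finType) (P : pred T)
  (D : {ffun T -> R}) : Prop :=
  (forall x, 0 <= D x) /\ (forall x, ~~ P x -> D x = 0) /\ \sum_x D x = 1.

Definition expect (R : numDomainType) (T U : finType) (D : {ffun T -> R})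
  (A : T -> U -> R) (u : U) : R :=
  \sum_(x : T) D x * A x u.

Definition maxmin_fair (R : numDomainType) (T U : finType) (P : pred T)
  (A : T -> U -> R) (F : {ffun T -> R}) : Prop :=
  is_distr_on P F /\
  (forall D : {ffun T -> R}, is_distr_on P D ->
    forall u : U, expect F A u < expect D A u ->
      exists v : U, expect D A v < expect F A v /\ expect F A v <= expect F A u)%type.

Definition value (R : numDomainType) (U : finType) (f : 'I_#|U| -> R)
  (g : U -> R) (r : ranking U) (u : U) : R := f (r u) - g u.

From HB Require Import structures.
From mathcomp Require Import all_boot all_order all_algebra.
From mathcomp Require Import all_fingroup lra.
Import Order.TTheory GRing.Theory Num.Theory.
Local Open Scope ring_scope.
Set Implicit Arguments. Unset Strict Implicit.

(* Proof idea (exchange argument).  Suppose the member u2 is placed better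
   than u1 in expectation, E_F[f(r u1)] < E_F[f(r u2)].  Swapping the
   positions of u1 and u2 in every ranking is a group-preserving
   permutation, so it maps valid rankings to valid rankings and turns F
   into another distribution D over valid rankings.  Under D, u1 gains
   strictly, only u2 loses, and everybody else is unaffected.  Maxmin-
   fairness then forces u2 to be no better off than u1 under F, i.e.
   E_F[f(r u2)] - g u2 <= E_F[f(r u1)] - g u1, which together with
   g u2 <= g u1 contradicts the assumption. *)

Lemma expect_sub_const (R : numDomainType) (T U : finType)
    (D : {ffun T -> R}) (D1 : \sum_x D x = 1)
    (a : T -> U -> R) (c : U -> R) (u : U) :
  expect D (fun x v => a x v - c v) u = expect D a u - c u.
Proof.
rewrite /expect.
under eq_bigr do rewrite mulrBr.
by rewrite sumrB -mulr_suml D1 mul1r.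
Qed.

Lemma is_distr_on_comp (R : numDomainType) (T : finType) (P : pred T)
    (h : T -> T) (h_inj : injective h) (D : {ffun T -> R}) :
  (forall x, P (h x) = P x) -> is_distr_on P D ->
  is_distr_on P [ffun x => D (h x)].
Proof.
move=> hP [D0 [Dout D1]]; split; first by move=> x; rewrite ffunE.
split; first by move=> x Px; rewrite ffunE Dout // hP.
rewrite -D1 [RHS](reindex_inj h_inj) /=.
by apply: eq_bigr => x _; rewrite ffunE.
Qed.

Lemma expect_comp (R : numDomainType) (T U : finType) (h h' : T -> T)
    (h'K : cancel h' h) (D : {ffun T -> R}) (A : T -> U -> R) (u : U) :
  expect [ffun x => D (h x)] A u = expect D (fun x => A (h' x)) u.
Proof.
rewrite /expect (reindex_inj (can_inj h'K)) /=.
by apply: eq_bigr => x _; rewrite ffunE h'K.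
Qed.

Lemma maxmin_fair_exchange (R : realDomainType) (T U : finType)
    (P : pred T) (A : T -> U -> R) (F D : {ffun T -> R}) (u1 u2 : U) :
  maxmin_fair P A F -> is_distr_on P D ->
  expect F A u1 < expect D A u1 ->
  (forall v, v != u1 -> v != u2 -> expect D A v = expect F A v) ->
  expect F A u2 <= expect F A u1.
Proof.
move=> [_ fair] Ddistr gain others.
have [v [loss v_worse]] := fair D Ddistr u1 gain.
have [vu1|vNu1] := eqVneq v u1.
  by move: loss; rewrite vu1 => /(lt_trans gain); rewrite ltxx.
have [<- //|vNu2] := eqVneq v u2.
by move: loss; rewrite others // ltxx.
Qed.

Section PermutedRankings.
Variables (U : finType) (t : nat) (grp : U -> 'I_t).
Variables (lo hi : 'I_#|U| -> 'I_t -> int).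

Definition permute_ranking (s : {perm U}) (r : ranking U) : ranking U :=
  [ffun u => r (s u)].

Lemma permute_rankingK (s : {perm U}) :
  cancel (permute_ranking s) (permute_ranking s^-1%g).
Proof. by move=> r; apply/ffunP => u; rewrite !ffunE permKV. Qed.

Lemma permute_rankingVK (s : {perm U}) :
  cancel (permute_ranking s^-1%g) (permute_ranking s).
Proof. by move=> r; apply/ffunP => u; rewrite !ffunE permK. Qed.

Lemma grp_permV (s : {perm U}) :
  (forall u, grp (s u) = grp u) -> forall u, grp (s^-1%g u) = grp u.
Proof. by move=> grp_s u; rewrite -{2}(permKV s u) grp_s. Qed.

(* A group-preserving permutation does not change the group counts of any
   prefix, since it permutes the members of each group among themselves. *)
Lemma prefix_count_permute (s : {perm U}) (r : ranking U) i k :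
  (forall u, grp (s u) = grp u) ->
  prefix_count grp (permute_ranking s r) i k = prefix_count grp r i k.
Proof.
move=> grp_s; rewrite /prefix_count.
have -> : [set u | (grp u == k) && (permute_ranking s r u <= i)%N]
    = s @^-1: [set u | (grp u == k) && (r u <= i)%N].
  by apply/setP => u; rewrite !inE ffunE grp_s.
by rewrite card_preimset //; exact: perm_inj.
Qed.

Lemma valid_ranking_permute_imp (s : {perm U}) (r : ranking U) :
  (forall u, grp (s u) = grp u) ->
  valid_ranking grp lo hi r -> valid_ranking grp lo hi (permute_ranking s r).
Proof.
move=> grp_s /andP [r_inj bounds]; apply/andP; split.
  apply/injectiveP => x y; rewrite !ffunE => /(injectiveP _ r_inj).
  exact: perm_inj.
apply/forallP => i; apply/forallP => k.
by rewrite prefix_count_permute //; move/forallP/(_ i)/forallP/(_ k): bounds.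
Qed.

Lemma valid_ranking_permute (s : {perm U}) (r : ranking U) :
  (forall u, grp (s u) = grp u) ->
  valid_ranking grp lo hi (permute_ranking s r) = valid_ranking grp lo hi r.
Proof.
move=> grp_s; apply/idP/idP; last exact: valid_ranking_permute_imp.
by move/(valid_ranking_permute_imp (grp_permV grp_s)); rewrite permute_rankingK.
Qed.

End PermutedRankings.

Theorem theorem1 (R : realFieldType) (U : finType) (t : nat)
  (grp : U -> 'I_t) (lo hi : 'I_#|U| -> 'I_t -> int)
  (Rel : U -> R) (f : 'I_#|U| -> R) (g : U -> R)
  (Rel_inj : injective Rel)
  (f_noninc : forall i j : 'I_#|U|, (i <= j)%N -> f j <= f i)
  (g_mono : forall u v : U, Rel v <= Rel u -> g v <= g u)
  (S_nonempty : exists r : ranking U, valid_ranking grp lo hi r)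
  (F : {ffun ranking U -> R})
  (F_fair : maxmin_fair (valid_ranking grp lo hi) (value f g) F)
  (u1 u2 : U) (same_group : grp u1 = grp u2) (rel12 : Rel u2 <= Rel u1) :
  \sum_(r : ranking U) F r * f (r u2) <= \sum_(r : ranking U) F r * f (r u1).
Proof.
pose E u := expect F (fun r v => f (r v)) u.
pose s := tperm u1 u2.
have grp_s u : grp (s u) = grp u by rewrite /s; case: tpermP => // ->.
have F_distr := F_fair.1; have F1 := F_distr.2.2.
(* D draws r from F and then exchanges the positions of u1 and u2. *)
pose D := [ffun r => F (permute_ranking s^-1%g r)].
have D_distr : is_distr_on (valid_ranking grp lo hi) D.
  apply: (is_distr_on_comp (can_inj (permute_rankingVK s)) _ F_distr) => r.
  exact/valid_ranking_permute/grp_permV.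
have EF u : expect F (value f g) u = E u - g u by exact: (expect_sub_const F1 (fun r v => f (r v))).
have ED u : expect D (value f g) u = E (s u) - g u.
  rewrite (expect_comp (permute_rankingK s)).
  rewrite (expect_sub_const F1 (fun r v => f (permute_ranking s r v))).
  by congr (_ - _); apply: eq_bigr => r _; rewrite ffunE.
have g12 : g u2 <= g u1 by exact: g_mono.
rewrite leNgt; apply/negP => E12.
have : expect F (value f g) u2 <= expect F (value f g) u1.
  apply: maxmin_fair_exchange F_fair D_distr _ _.
    by rewrite EF ED /s tpermL; rewrite /E /expect; lra.
  by move=> v vNu1 vNu2; rewrite EF ED /s tpermD // eq_sym.
by rewrite !EF /E /expect; lra.
Qed.
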